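(* Let $\mathsf{Syn}(\delta)$ be the free PROP on a single generator $\delta:1\to2$ (graph model in the context) and $\mathbf{FinCorel}$ the PROP of finite corelations. The assignment sending a morphism $f:m\to n$ of $\mathsf{Syn}(\delta)$ to its ancestry partition $\widetilde{\pi}(f)$ extends to a strict symmetric monoidal functor $\Pi:\mathsf{Syn}(\delta)\to\mathbf{FinCorel}$ which is the identity on objects.
   Context: A PROP is a strict symmetric monoidal category whose monoid of objects is $(\mathbb{N},+,0)$. Write $\underline{m}=\{1,\dots,m\}$. $\mathsf{Syn}(\delta)$: objects are natural numbers; a morphism $f:m\to n$ is an isomorphism class of finite directed acyclic graphs $G(f)$ with $m$ linearly ordered input half-edges, $n$ linearly ordered output half-edges, and a finite set of internal vertices, each with exactly one incoming half-edge and a linearly ordered pair of outgoing half-edges; isomorphisms preserve the boundary orders and vertex incidence. Composition glues outputs to inputs in order; tensor ($+$) is disjoint union with concatenated boundary orders; symmetries are wire crossings (not vertices, and they connect nothing beyond the wires they permute). $\mathbf{FinCorel}$: objects $\mathbb{N}$; morphisms $m\to n$ are equivalence relations on $\underline{m}\sqcup\underline{n}$; composite of $R:m\to n$, $S:n\to p$ is the restriction to $\underline{m}\sqcup\underline{p}$ of the equivalence relation generated by $R\cup S$ on $\underline{m}\sqcup\underline{n}\sqcup\underline{p}$; tensor is disjoint union with reindexing; symmetries are transposition corelations. Ancestry partition: for $f:m\to n$, let $|G(f)|$ be the underlying undirected graph of $G(f)$ with inputs attached as pendant vertices labelled by $\underline{m}$ and outputs as pendant vertices labelled by $\underline{n}$;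 $\widetilde\pi(f)$ is the equivalence relation on $\underline{m}\sqcup\underline{n}$ with $x\sim y$ iff pendants $x$ and $y$ lie in the same connected component of $|G(f)|$. *)

From mathcomp Require Import all_boot.
Set Warnings "-notation-overridden".
Set Implicit Arguments. Unset Strict Implicit. Unset Printing Implicit Defensive.

(* A (raw) graph m -> n: nv internal vertices, each with one incoming
   half-edge and an ordered pair (false = first, true = second) of outgoing
   half-edges.  Sources of wires: inputs 'I_m and outgoing ports of vertices;
   targets of wires: outputs 'I_n and incoming ports of vertices.  [wire]
   says where each source half-edge is glued. *)
Record graph (m n : nat) := Graph {
  nv : nat;
  wire : ('I_m + ('I_nv * bool))%type -> ('I_n + 'I_nv)%type }.
Arguments nv {m n} g.
Arguments wire {m n} g _.

Definition vedge m n (f : graph m n) : rel 'I_(nv f) :=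
  fun v u => [exists b : bool, wire f (inr (v, b)) == inr u].
Arguments vedge {m n} f _ _.

Definition valid m n (f : graph m n) : Prop :=
  bijective (wire f) /\
  (forall v u, vedge f v u -> ~~ connect (vedge f) u v).

Definition mapS m k k' (phi : 'I_k -> 'I_k')
  (s : ('I_m + ('I_k * bool))%type) : ('I_m + ('I_k' * bool))%type :=
  match s with inl i => inl i | inr (v, b) => inr (phi v, b) end.
Definition mapT n k k' (phi : 'I_k -> 'I_k')
  (t : ('I_n + 'I_k)%type) : ('I_n + 'I_k')%type :=
  match t with inl j => inl j | inr v => inr (phi v) end.

Definition giso m n (f g : graph m n) : Prop :=
  exists phi : 'I_(nv f) -> 'I_(nv g), bijective phi /\
    forall s, wire g (mapS phi s) = mapT phi (wire f s).

Definition gfun m n (h : 'I_m -> 'I_n) : graph m n :=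
  @Graph m n 0 (fun s => match s with
                         | inl i => inl (h i)
                         | inr (v, _) => inr v end).

Definition gid m : graph m m := gfun (fun i : 'I_m => i).

Definition swap_ord m n (i : 'I_(m + n)) : 'I_(n + m) :=
  match split i with inl a => rshift n a | inr b => lshift m b end.

Definition gsym m n : graph (m + n) (n + m) := gfun (@swap_ord m n).

Definition gcomp m n p (f : graph m n) (g : graph n p) : graph m p :=
  let k1 := nv f in let k2 := nv g in
  let liftG (t : ('I_p + 'I_k2)%type) : ('I_p + 'I_(k1 + k2))%type :=
      match t with inl q => inl q | inr u => inr (rshift k1 u) end in
  let fromF (t : ('I_n + 'I_k1)%type) : ('I_p + 'I_(k1 + k2))%type :=
      match t with inl j => liftG (wire g (inl j))
                 | inr v => inr (lshift k2 v) end in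
  @Graph m p (k1 + k2) (fun s => match s with
    | inl i => fromF (wire f (inl i))
    | inr (v, b) => match split v with
                    | inl v1 => fromF (wire f (inr (v1, b)))
                    | inr v2 => liftG (wire g (inr (v2, b))) end end).

Definition gtens m n m' n' (f : graph m n) (g : graph m' n') :
    graph (m + m') (n + n') :=
  let k1 := nv f in let k2 := nv g in
  let Lf (t : ('I_n + 'I_k1)%type) : ('I_(n + n') + 'I_(k1 + k2))%type :=
      match t with inl j => inl (lshift n' j) | inr v => inr (lshift k2 v) end in
  let Lg (t : ('I_n' + 'I_k2)%type) : ('I_(n + n') + 'I_(k1 + k2))%type :=
      match t with inl j => inl (rshift n j) | inr v => inr (rshift k1 v) end in
  @Graph (m + m') (n + n') (k1 + k2) (fun s => match s with
    | inl i => match split i with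
               | inl i1 => Lf (wire f (inl i1))
               | inr i2 => Lg (wire g (inl i2)) end
    | inr (v, b) => match split v with
               | inl v1 => Lf (wire f (inr (v1, b)))
               | inr v2 => Lg (wire g (inr (v2, b))) end end).

(* A corelation m -> n is an equivalence relation on 'I_m + 'I_n
   (left summand = domain, right summand = codomain). *)
Definition corel (m n : nat) := rel ('I_m + 'I_n)%type.

Definition is_corel m n (R : corel m n) : Prop :=
  [/\ reflexive R, symmetric R & transitive R].

Definition corel_eq m n (R S : corel m n) : Prop := forall x y, R x y = S x y.

Definition cfun m n (h : 'I_m -> 'I_n) : corel m n :=
  let pr (x : ('I_m + 'I_n)%type) : 'I_n :=
      match x with inl i => h i | inr j => j end in
  fun x y => pr x == pr y.

Arguments cfun {m n} h _ _.
Definition cid m : corel m m := cfun (fun i : 'I_m => i).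
Definition csym m n : corel (m + n) (n + m) := cfun (@swap_ord m n).
Arguments cid : clear implicits.
Arguments csym : clear implicits.

(* composite: restriction of the equivalence relation generated by R u S *)
Definition ccomp m n p (R : corel m n) (S : corel n p) : corel m p :=
  let U := (('I_m + 'I_n) + 'I_p)%type in
  let inS (x : ('I_n + 'I_p)%type) : U :=
      match x with inl j => inl (inr j) | inr q => inr q end in
  let e (a b : U) : bool :=
      [exists x, exists y, [&& R x y, a == inl x & b == inl y]] ||
      [exists x, exists y, [&& S x y, a == inS x & b == inS y]] in
  let e' (a b : U) : bool := e a b || e b a in
  let emb (x : ('I_m + 'I_p)%type) : U :=
      match x with inl i => inl (inl i) | inr q => inr q end in
  fun x y => connect e' (emb x) (emb y).

Definition cside m n m' n' (x : ('I_(m + m') + 'I_(n + n'))%type) :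
    (('I_m + 'I_n) + ('I_m' + 'I_n'))%type :=
  match x with
  | inl i => match split i with inl a => inl (inl a) | inr b => inr (inl b) end
  | inr j => match split j with inl a => inl (inr a) | inr b => inr (inr b) end
  end.

Definition ctens m n m' n' (R : corel m n) (S : corel m' n') :
    corel (m + m') (n + n') :=
  fun x y => match cside x, cside y with
             | inl a, inl b => R a b
             | inr a, inr b => S a b
             | _, _ => false end.

(* nodes of |G(f)|: pendant inputs, pendant outputs, internal vertices *)
Definition ancestry m n (f : graph m n) : corel m n :=
  let N := (('I_m + 'I_n) + 'I_(nv f))%type in
  let srcn (s : ('I_m + ('I_(nv f) * bool))%type) : N :=
      match s with inl i => inl (inl i) | inr (v, _) => inr v end in
  let tgtn (t : ('I_n + 'I_(nv f))%type) : N :=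
      match t with inl j => inl (inr j) | inr u => inr u end in
  let adj (a b : N) : bool :=
      [exists s, ((a == srcn s) && (b == tgtn (wire f s))) ||
                 ((b == srcn s) && (a == tgtn (wire f s)))] in
  fun x y => connect adj (inl x) (inl y).

From mathcomp Require Import all_boot.
Set Implicit Arguments. Unset Strict Implicit. Unset Printing Implicit Defensive.

(* The ancestry partition is connectivity in the undirected graph |G(f)|, read
   off on the boundary.  A graph without vertices (identity, symmetry) joins
   each input directly to its image, and an isomorphism transports wires.  The
   graph of a tensor product is the disjoint union of the two graphs.  The
   graph of a composite is |G(f)| and |G(g)| glued along output j of f ~ input
   j of g; a path between boundary points splits at the glued points into
   segments inside |G(f)| or |G(g)|, i.e. into steps of Pi f or Pi g, which is
   exactly how the composite corelation is generated.  Neither bijectivity of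
   the wiring nor acyclicity plays any role. *)

Lemma connect_min (T : finType) (e r : rel T) :
  reflexive r -> transitive r -> subrel e r -> subrel (connect e) r.
Proof.
move=> r_refl r_trans e_r x _ /connectP[p e_p ->].
elim: p x e_p => [|y p IHp] x /=; first by move=> _; apply: r_refl.
by case/andP=> /e_r xy /IHp; apply: r_trans xy.
Qed.

Lemma connect_homo (T T' : finType) (e : rel T) (e' : rel T') (h : T -> T') :
  (forall a b, e a b -> connect e' (h a) (h b)) ->
  forall a b, connect e a b -> connect e' (h a) (h b).
Proof.
move=> e_h; apply: (connect_min (r := fun a b => connect e' (h a) (h b))).
- by move=> a /=; apply: connect0.
- by move=> b a c /=; apply: connect_trans.
- exact: e_h.
Qed.

Lemma connect_invariant (T : finType) (T' : eqType) (e : rel T) (k : T -> T') :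
  (forall a b, e a b -> k a = k b) -> forall a b, connect e a b -> k a = k b.
Proof.
move=> e_k a b ab; apply/eqP; move: ab.
apply: (connect_min (r := fun a b => k a == k b)).
- by move=> c /=.
- by move=> c a' d /eqP-> /eqP->.
- by move=> c d /e_k /= ->.
Qed.

(* A maximal run of [local] steps collapses to one step, so a path between
   points of [B] can be replaced by one that stays in [B]. *)
Lemma connect_compress (T : finType) (e local cross : rel T) (B : pred T) :
  reflexive local -> transitive local ->
  (forall a b, e a b -> local a b || [&& B a, B b & cross a b]) ->
  forall a b, B a -> B b -> connect e a b ->
     connect (fun c d => [&& B c, B d & local c d || cross c d]) a b.
Proof.
set bridge := (fun c d => [&& _, _ & _]); move=> l_refl l_trans e_split.
have reach c b : B b -> connect e c b ->
    exists2 d, B d && local c d & connect bridge d b.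
  move=> Bb /connectP[q e_q b_last]; rewrite {}b_last in Bb *.
  elim: q c e_q Bb => [|c' q IHq] c /=.
    by move=> _ Bc; exists c; rewrite ?Bc ?l_refl ?connect0.
  case/andP=> cc' /IHq/[apply] -[d /andP[Bd c'd] db].
  case/orP: (e_split _ _ cc') => [lcc' | /and3P[Bc Bc' xcc']].
    by exists d; rewrite // Bd (l_trans _ _ _ lcc' c'd).
  exists c; first by rewrite Bc l_refl.
  have bcc' : bridge c c' by rewrite /bridge Bc Bc' xcc' orbT.
  have bc'd : bridge c' d by rewrite /bridge Bc' Bd c'd.
  exact: connect_trans (connect1 bcc') (connect_trans (connect1 bc'd) db).
move=> a b Ba Bb /(reach _ _ Bb)[d /andP[Bd ad] db].
by apply: connect_trans db; apply: connect1; rewrite /bridge Ba Bd ad.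
Qed.

Definition sumrel (T1 T2 : Type) (e1 : rel T1) (e2 : rel T2) : rel (T1 + T2) :=
  fun x y => match x, y with
             | inl a, inl b => e1 a b
             | inr a, inr b => e2 a b
             | _, _ => false
             end.

Lemma connect_sumrel (T1 T2 : finType) (e1 : rel T1) (e2 : rel T2) :
  connect (sumrel e1 e2) =2 sumrel (connect e1) (connect e2).
Proof.
move=> x y; apply/idP/idP.
  apply: connect_min => [[a|a] | [b|b] [a|a] [c|c] | [a|a] [b|b]] //=;
    by [apply: connect0 | apply: connect_trans | apply: connect1].
case: x y => [a|a] [b|b] //=.
  by apply: (connect_homo (h := inl)) => c d cd; apply: connect1.
by apply: (connect_homo (h := inr)) => c d cd; apply: connect1.
Qed.

Section AncestryGraph.
Variables (m n : nat) (f : graph m n).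

Definition source := ('I_m + ('I_(nv f) * bool))%type.
Definition target := ('I_n + 'I_(nv f))%type.
Definition node := (('I_m + 'I_n) + 'I_(nv f))%type.

Definition src_node (s : source) : node :=
  match s with inl i => inl (inl i) | inr (v, _) => inr v end.
Definition tgt_node (t : target) : node :=
  match t with inl j => inl (inr j) | inr u => inr u end.

Definition adj : rel node := fun a b =>
  [exists s, ((a == src_node s) && (b == tgt_node (wire f s))) ||
             ((b == src_node s) && (a == tgt_node (wire f s)))].

Lemma ancestryE x y : ancestry f x y = connect adj (inl x) (inl y).
Proof. by []. Qed.

Lemma adj_sym : symmetric adj.
Proof. by move=> a b; apply: eq_existsb => s; rewrite orbC. Qed.

Lemma connect_adj_sym : connect_sym adj.
Proof. exact/sym_connect_sym/adj_sym. Qed.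

Lemma adj_wire s : adj (src_node s) (tgt_node (wire f s)).
Proof. by apply/existsP; exists s; rewrite !eqxx. Qed.

Lemma connect_wire s : connect adj (src_node s) (tgt_node (wire f s)).
Proof. exact/connect1/adj_wire. Qed.

Lemma connect_adj_homo (T : finType) (e : rel T) (h : node -> T) :
  connect_sym e ->
  (forall s, connect e (h (src_node s)) (h (tgt_node (wire f s)))) ->
  forall a b, connect adj a b -> connect e (h a) (h b).
Proof.
move=> e_sym h_wire; apply: connect_homo => a b /existsP[s].
by case/orP=> /andP[/eqP-> /eqP->]; [|rewrite e_sym]; apply: h_wire.
Qed.

Lemma is_corel_ancestry : is_corel (ancestry f).
Proof.
split=> [x | x y | y x z]; rewrite ?ancestryE.
- exact: connect0.
- exact: connect_adj_sym.
- exact: connect_trans.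
Qed.

End AncestryGraph.

Arguments adj {m n} f _ _.
Arguments adj_wire {m n} f s.
Arguments connect_wire {m n} f s.

Lemma connect_adj_embed m n m' n' (f : graph m n) (g : graph m' n')
    (hN : node f -> node g) (hS : source f -> source g) :
  (forall s, src_node (hS s) = hN (src_node s)) ->
  (forall s, tgt_node (wire g (hS s)) = hN (tgt_node (wire f s))) ->
  forall a b, connect (adj f) a b -> connect (adj g) (hN a) (hN b).
Proof.
move=> hS_src hS_tgt; apply: connect_adj_homo; first exact: connect_adj_sym.
by move=> s; rewrite -hS_src -hS_tgt; apply: connect_wire.
Qed.

Definition map_node m n (f g : graph m n) (phi : 'I_(nv f) -> 'I_(nv g))
    (a : node f) : node g :=
  match a with inl x => inl x | inr v => inr (phi v) end.

Lemma ancestry_transport m n (f g : graph m n) (phi : 'I_(nv f) -> 'I_(nv g)) :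
  (forall s, wire g (mapS phi s) = mapT phi (wire f s)) ->
  forall x y, ancestry f x y -> ancestry g x y.
Proof.
move=> phi_wire x y; rewrite !ancestryE.
apply: (connect_adj_embed (hN := map_node phi) (hS := mapS phi)) => s.
  by case: s => [|[]].
by rewrite phi_wire; case: (wire f s).
Qed.

Lemma ancestry_giso m n (f g : graph m n) :
  giso f g -> corel_eq (ancestry f) (ancestry g).
Proof.
case=> phi [[psi phiK psiK] phi_wire] x y; apply/idP/idP.
  exact: ancestry_transport phi_wire x y.
apply: (ancestry_transport (phi := psi)) => s.
have := phi_wire (mapS psi s).
have -> : mapS phi (mapS psi s) = s by case: s => [|[v b]] //=; rewrite psiK.
by move=> ->; case: (wire f _) => //= v; rewrite phiK.
Qed.

Lemma ancestry_gfun m n (h : 'I_m -> 'I_n) : corel_eq (ancestry (gfun h)) (cfun h).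
Proof.
pose out (x : ('I_m + 'I_n)%type) := match x with inl i => h i | inr j => j end.
have -> : cfun h = fun x y => out x == out y by [].
move=> x y; rewrite ancestryE; apply/idP/eqP.
  pose k (a : node (gfun h)) := if a is inl x then Some (out x) else None.
  have k_inv : forall a b, connect (adj (gfun h)) a b -> k a = k b.
    apply: connect_invariant => a b /existsP[[i | [[v ?] ?]]] //.
    by case/orP=> /andP[/eqP-> /eqP->].
  by move/k_inv => [].
have to_out z : connect (adj (gfun h)) (inl z) (inl (inr (out z))).
  by case: z => [i|j]; [apply: (connect_wire (gfun h) (inl i)) | apply: connect0].
move=> out_xy; apply: connect_trans (to_out x) _.
by rewrite out_xy connect_adj_sym; apply: to_out.
Qed.

Lemma split_lshift m n (i : 'I_m) : split (lshift n i) = inl i.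
Proof. exact: (unsplitK (inl i)). Qed.

Lemma split_rshift m n (j : 'I_n) : split (rshift m j) = inr j.
Proof. exact: (unsplitK (inr j)). Qed.

Section Tensor.
Variables (m n m' n' : nat) (f : graph m n) (g : graph m' n').

Definition tens_split (a : node (gtens f g)) : node f + node g :=
  match a with
  | inl x => match cside x with inl b => inl (inl b) | inr b => inr (inl b) end
  | inr v => match split v with inl v1 => inl (inr v1) | inr v2 => inr (inr v2) end
  end.

Definition tens_unsplit (a : node f + node g) : node (gtens f g) :=
  match a with
  | inl (inl (inl i)) => inl (inl (lshift m' i))
  | inl (inl (inr j)) => inl (inr (lshift n' j))
  | inl (inr v) => inr (lshift (nv g) v)
  | inr (inl (inl i)) => inl (inl (rshift m i))
  | inr (inl (inr j)) => inl (inr (rshift n j))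
  | inr (inr v) => inr (rshift (nv f) v)
  end.

Definition tens_src_split (s : source (gtens f g)) : source f + source g :=
  match s with
  | inl i => match split i with inl i1 => inl (inl i1) | inr i2 => inr (inl i2) end
  | inr (v, b) =>
      match split v with inl v1 => inl (inr (v1, b)) | inr v2 => inr (inr (v2, b)) end
  end.

Definition tens_src_unsplit (s : source f + source g) : source (gtens f g) :=
  match s with
  | inl (inl i) => inl (lshift m' i)
  | inl (inr (v, b)) => inr (lshift (nv g) v, b)
  | inr (inl i) => inl (rshift m i)
  | inr (inr (v, b)) => inr (rshift (nv f) v, b)
  end.

Lemma tens_splitK : cancel tens_unsplit tens_split.
Proof. by case=> [[[i|j]|v]|[[i|j]|v]]; rewrite /= ?split_lshift ?split_rshift. Qed.

Lemma tens_unsplitK x : tens_unsplit (tens_split (inl x)) = inl x.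
Proof. by case: x => [i|j]; rewrite /= /cside; case: split_ordP => k ->. Qed.

Lemma tens_src_splitK : cancel tens_src_split tens_src_unsplit.
Proof. by case=> [i|[v b]] /=; case: split_ordP => k ->. Qed.

Lemma tens_src_node s :
  src_node (tens_src_unsplit s) = tens_unsplit (match s with
    | inl s => inl (src_node s) | inr s => inr (src_node s) end).
Proof. by case: s => [[i|[v b]]|[i|[v b]]]. Qed.

Lemma tens_tgt_node s :
  tgt_node (wire (gtens f g) (tens_src_unsplit s)) = tens_unsplit (match s with
    | inl s => inl (tgt_node (wire f s)) | inr s => inr (tgt_node (wire g s)) end).
Proof.
case: s => [[i|[v b]]|[i|[v b]]]; rewrite /= ?split_lshift ?split_rshift;
  by case: (wire _ _).
Qed.

Lemma connect_tens_split a b : connect (adj (gtens f g)) a b ->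
  connect (sumrel (adj f) (adj g)) (tens_split a) (tens_split b).
Proof.
apply: connect_adj_homo => [|s].
  by apply: sym_connect_sym => -[a'|a'] [b'|b'] //=; apply: adj_sym.
rewrite -(tens_src_splitK s) tens_src_node tens_tgt_node !tens_splitK.
by case: (tens_src_split s) => s'; apply/connect1/adj_wire.
Qed.

Lemma connect_tens_unsplit a b : connect (sumrel (adj f) (adj g)) a b ->
  connect (adj (gtens f g)) (tens_unsplit a) (tens_unsplit b).
Proof.
apply: connect_homo => -[a'|a'] [b'|b'] //= /connect1.
  apply: (connect_adj_embed (hN := fun a => tens_unsplit (inl a))
                            (hS := fun s => tens_src_unsplit (inl s))) => s.
    exact: tens_src_node (inl s).
  exact: tens_tgt_node (inl s).
apply: (connect_adj_embed (hN := fun a => tens_unsplit (inr a))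
                          (hS := fun s => tens_src_unsplit (inr s))) => s.
  exact: tens_src_node (inr s).
exact: tens_tgt_node (inr s).
Qed.

Lemma ancestry_gtens :
  corel_eq (ancestry (gtens f g)) (ctens (ancestry f) (ancestry g)).
Proof.
move=> x y; rewrite ancestryE; apply/idP/idP.
  move/connect_tens_split; rewrite connect_sumrel /ctens /=.
  by case: (cside x) => ?; case: (cside y).
rewrite -(tens_unsplitK x) -(tens_unsplitK y) => xy; apply: connect_tens_unsplit.
rewrite connect_sumrel; move: xy; rewrite /ctens /=.
by case: (cside x) => ?; case: (cside y).
Qed.

End Tensor.

Section CorelComposite.
Variables (m n p : nat) (R : corel m n) (S : corel n p).

Definition ccomp_node := (('I_m + 'I_n) + 'I_p)%type.

Definition ccomp_in_right (x : 'I_n + 'I_p) : ccomp_node :=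
  match x with inl j => inl (inr j) | inr q => inr q end.

Definition ccomp_bnd (x : 'I_m + 'I_p) : ccomp_node :=
  match x with inl i => inl (inl i) | inr q => inr q end.

Definition ccomp_step (a b : ccomp_node) : bool :=
  [exists x, exists y, [&& R x y, a == inl x & b == inl y]] ||
  [exists x, exists y, [&& S x y, a == ccomp_in_right x & b == ccomp_in_right y]].

Definition ccomp_adj : rel ccomp_node := fun a b => ccomp_step a b || ccomp_step b a.

Lemma ccompE x y : ccomp R S x y = connect ccomp_adj (ccomp_bnd x) (ccomp_bnd y).
Proof. by []. Qed.

Lemma ccomp_adj_left x y : R x y -> ccomp_adj (inl x) (inl y).
Proof.
move=> xy; apply/orP; left; apply/orP; left.
by apply/existsP; exists x; apply/existsP; exists y; rewrite xy !eqxx.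
Qed.

Lemma ccomp_adj_right x y : S x y -> ccomp_adj (ccomp_in_right x) (ccomp_in_right y).
Proof.
move=> xy; apply/orP; left; apply/orP; right.
by apply/existsP; exists x; apply/existsP; exists y; rewrite xy !eqxx.
Qed.

End CorelComposite.

Arguments ccomp_in_right {m n p} x.
Arguments ccomp_bnd {m n p} x.

Section Composition.
Variables (m n p : nat) (f : graph m n) (g : graph n p).

Definition glued := (node f + node g)%type.

(* The gluing of output j of f to input j of g is realised by an extra edge. *)
Definition seam : rel glued := fun a b =>
  match a, b with
  | inl (inl (inr j)), inr (inl (inl j')) | inr (inl (inl j')), inl (inl (inr j)) =>
      j == j'
  | _, _ => false
  end.

Definition glued_adj : rel glued := fun a b => sumrel (adj f) (adj g) a b || seam a b.

Definition glued_bnd (x : 'I_m + 'I_p) : glued :=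
  match x with inl i => inl (inl (inl i)) | inr q => inr (inl (inr q)) end.

Lemma connect_glued_sym : connect_sym glued_adj.
Proof.
apply: sym_connect_sym => a b; rewrite /glued_adj.
by case: a b => [a|a] [b|b] /=; rewrite 1?adj_sym //; case: a b => [[?|?]|?] [[?|?]|?].
Qed.

Lemma connect_glued_left a b : connect (adj f) a b -> connect glued_adj (inl a) (inl b).
Proof. by apply: connect_homo => c d cd; apply: connect1; rewrite /glued_adj /= cd. Qed.

Lemma connect_glued_right a b :
  connect (adj g) a b -> connect glued_adj (inr a) (inr b).
Proof. by apply: connect_homo => c d cd; apply: connect1; rewrite /glued_adj /= cd. Qed.

Definition comp_split (a : node (gcomp f g)) : glued :=
  match a with
  | inl x => glued_bnd x
  | inr v => match split v with inl v1 => inl (inr v1) | inr v2 => inr (inr v2) end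
  end.

(* [gcomp] continues the wire into output j of f along the wire out of input j
   of g, so both ports are sent to where the latter ends. *)
Definition comp_tgt_right (t : target g) : node (gcomp f g) :=
  match t with inl q => inl (inr q) | inr u => inr (rshift (nv f) u) end.

Definition comp_node_left (a : node f) : node (gcomp f g) :=
  match a with
  | inl (inl i) => inl (inl i)
  | inl (inr j) => comp_tgt_right (wire g (inl j))
  | inr v => inr (lshift (nv g) v)
  end.

Definition comp_node_right (a : node g) : node (gcomp f g) :=
  match a with
  | inl (inl j) => comp_tgt_right (wire g (inl j))
  | inl (inr q) => inl (inr q)
  | inr u => inr (rshift (nv f) u)
  end.

Definition comp_merge (a : glued) : node (gcomp f g) :=
  match a with inl a => comp_node_left a | inr a => comp_node_right a end.

Definition comp_src_left (s : source f) : source (gcomp f g) :=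
  match s with inl i => inl i | inr (v, b) => inr (lshift (nv g) v, b) end.

Lemma comp_src_left_node s : src_node (comp_src_left s) = comp_node_left (src_node s).
Proof. by case: s => [|[]]. Qed.

Lemma comp_tgt_left_node s :
  tgt_node (wire (gcomp f g) (comp_src_left s)) = comp_node_left (tgt_node (wire f s)).
Proof.
case: s => [i|[v b]] /=; rewrite ?split_lshift;
  by case: (wire f _) => [j|u] //=; case: (wire g _).
Qed.

Lemma comp_tgt_right_node (t : target g) :
  comp_node_right (tgt_node t) = comp_tgt_right t.
Proof. by case: t. Qed.

Lemma comp_wire_right v b :
  tgt_node (wire (gcomp f g) (inr (rshift (nv f) v, b))) =
  comp_tgt_right (wire g (inr (v, b))).
Proof. by rewrite /= split_rshift; case: (wire g _). Qed.

Lemma comp_split_tgt_right t : comp_split (comp_tgt_right t) = inr (tgt_node t).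
Proof. by case: t => [q|u] //=; rewrite split_rshift. Qed.

Lemma connect_glued_tgt_left (t : target f) :
  connect glued_adj (inl (tgt_node t)) (comp_split (comp_node_left (tgt_node t))).
Proof.
case: t => [j|v] /=; last by rewrite split_lshift connect0.
rewrite comp_split_tgt_right.
have seam_j : glued_adj (inl (inl (inr j))) (inr (src_node (inl j))).
  by rewrite /glued_adj /= eqxx.
exact: connect_trans (connect1 seam_j) (connect_glued_right (connect_wire g (inl j))).
Qed.

Lemma connect_glued_wire_left s :
  connect glued_adj (comp_split (src_node (comp_src_left s)))
                    (comp_split (tgt_node (wire (gcomp f g) (comp_src_left s)))).
Proof.
rewrite comp_tgt_left_node.
have -> : comp_split (src_node (comp_src_left s)) = inl (src_node s).
  by case: s => [|[v b]] //=; rewrite split_lshift.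
exact: connect_trans (connect_glued_left (connect_wire f s)) (connect_glued_tgt_left _).
Qed.

Lemma connect_comp_split a b : connect (adj (gcomp f g)) a b ->
  connect glued_adj (comp_split a) (comp_split b).
Proof.
apply: connect_adj_homo => [|[i|[v c]]]; first exact: connect_glued_sym.
  exact: (connect_glued_wire_left (inl i)).
case: (split_ordP v) => k ->; first exact: (connect_glued_wire_left (inr (k, c))).
rewrite comp_wire_right comp_split_tgt_right /= split_rshift.
exact: connect_glued_right (connect_wire g (inr (k, c))).
Qed.

Lemma comp_merge_seam a b : seam a b -> comp_merge a = comp_merge b.
Proof. by case: a b => [[[?|?]|?]|[[?|?]|?]] [[[?|?]|?]|[[?|?]|?]] //= /eqP->. Qed.

Lemma connect_comp_merge a b : connect glued_adj a b ->
  connect (adj (gcomp f g)) (comp_merge a) (comp_merge b).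
Proof.
apply: connect_homo => a' b' /orP[|/comp_merge_seam->]; last exact: connect0.
case: a' b' => [a'|a'] [b'|b'] //= /connect1.
  apply: (connect_adj_embed (hN := comp_node_left) (hS := comp_src_left)).
    exact: comp_src_left_node.
  exact: comp_tgt_left_node.
apply: (connect_adj_homo (h := comp_node_right)) => [|[j|[v c]]].
- exact: connect_adj_sym.
- by rewrite comp_tgt_right_node; apply: connect0.
- by rewrite comp_tgt_right_node -comp_wire_right; apply: connect_wire.
Qed.

Lemma ancestry_gcomp_glued x y :
  ancestry (gcomp f g) x y = connect glued_adj (glued_bnd x) (glued_bnd y).
Proof.
rewrite ancestryE; apply/idP/idP; first exact: connect_comp_split.
have merge_bnd z : comp_merge (glued_bnd z) = inl z by case: z.
by move/connect_comp_merge; rewrite !merge_bnd.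
Qed.

Definition glued_boundary (a : glued) : bool :=
  match a with inl (inl _) | inr (inl _) => true | _ => false end.

Definition glued_local : rel glued := sumrel (connect (adj f)) (connect (adj g)).

(* [u0] is a junk value on internal vertices, which bridging steps never reach. *)
Definition glued_to_ccomp (u0 : ccomp_node m n p) (a : glued) : ccomp_node m n p :=
  match a with
  | inl (inl x) => inl x
  | inr (inl x) => ccomp_in_right x
  | _ => u0
  end.

Definition ccomp_to_glued (u : ccomp_node m n p) : glued :=
  match u with inl x => inl (inl x) | inr q => inr (inl (inr q)) end.

Lemma glued_to_ccomp_bridge u0 a b :
  [&& glued_boundary a, glued_boundary b & glued_local a b || seam a b] ->
  connect (ccomp_adj (ancestry f) (ancestry g))
          (glued_to_ccomp u0 a) (glued_to_ccomp u0 b).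
Proof.
case: a b => [[a|a]|[a|a]] [[b|b]|[b|b]] //=.
- by case: a => a ab; apply/connect1/ccomp_adj_left; rewrite orbF in ab.
- by case: a b => [?|j] [j'|?] //= /eqP->; apply: connect0.
- by case: a b => [j'|?] [?|j] //= /eqP->; apply: connect0.
- by case: a => a ab; apply/connect1/ccomp_adj_right; rewrite orbF in ab.
Qed.

Lemma connect_ccomp_to_glued_right x :
  connect glued_adj (ccomp_to_glued (ccomp_in_right x)) (inr (inl x)).
Proof.
by case: x => [j|q] /=; [apply: connect1; rewrite /glued_adj /= eqxx | apply: connect0].
Qed.

Lemma ccomp_to_glued_step a b : ccomp_step (ancestry f) (ancestry g) a b ->
  connect glued_adj (ccomp_to_glued a) (ccomp_to_glued b).
Proof.
case/orP=> /existsP[x /existsP[y /and3P[xy /eqP-> /eqP->]]].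
  exact: connect_glued_left.
apply: connect_trans (connect_ccomp_to_glued_right x) _.
rewrite connect_glued_sym; apply: connect_trans (connect_ccomp_to_glued_right y) _.
by rewrite connect_glued_sym; apply: connect_glued_right.
Qed.

Lemma glued_ccomp x y : connect glued_adj (glued_bnd x) (glued_bnd y) =
  ccomp (ancestry f) (ancestry g) x y.
Proof.
rewrite ccompE; apply/idP/idP.
  have bnd_ok z : glued_boundary (glued_bnd z) by case: z.
  have to_ccomp z : glued_to_ccomp (ccomp_bnd x) (glued_bnd z) = ccomp_bnd z by case: z.
  have local_refl : reflexive glued_local by case=> a; apply: connect0.
  have local_trans : transitive glued_local.
    by move=> [b|b] [a|a] [c|c] //=; apply: connect_trans.
  have adj_split a b : glued_adj a b ->
      glued_local a b || [&& glued_boundary a, glued_boundary b & seam a b].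
    case/orP=> [ab | ab]; first by case: a b ab => a [] b //= /connect1->.
    by case: a b ab => [[[?|?]|?]|[[?|?]|?]] [[[?|?]|?]|[[?|?]|?]] //= ->; rewrite orbT.
  move/(connect_compress local_refl local_trans adj_split (bnd_ok x) (bnd_ok y)).
  by move/(connect_homo (glued_to_ccomp_bridge (ccomp_bnd x))); rewrite !to_ccomp.
have to_glued z : ccomp_to_glued (ccomp_bnd z) = glued_bnd z by case: z.
rewrite -to_glued -(to_glued y); apply: connect_homo => a b.
by case/orP=> /ccomp_to_glued_step //; rewrite connect_glued_sym.
Qed.

End Composition.

Lemma ancestry_gcomp m n p (f : graph m n) (g : graph n p) :
  corel_eq (ancestry (gcomp f g)) (ccomp (ancestry f) (ancestry g)).
Proof. by move=> x y; rewrite ancestry_gcomp_glued glued_ccomp. Qed.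

Theorem theorem2p7 :
  (* Pi f is a morphism of FinCorel, and is well defined on iso classes *)
  (forall m n (f : graph m n), valid f -> is_corel (ancestry f)) /\
  (forall m n (f g : graph m n), valid f -> valid g -> giso f g ->
     corel_eq (ancestry f) (ancestry g)) /\
  (* identities *)
  (forall m, corel_eq (ancestry (gid m)) (cid m)) /\
  (* composition *)
  (forall m n p (f : graph m n) (g : graph n p), valid f -> valid g ->
     corel_eq (ancestry (gcomp f g)) (ccomp (ancestry f) (ancestry g))) /\
  (* tensor *)
  (forall m n m' n' (f : graph m n) (g : graph m' n'), valid f -> valid g ->
     corel_eq (ancestry (gtens f g)) (ctens (ancestry f) (ancestry g))) /\
  (* symmetries *)
  (forall m n, corel_eq (ancestry (gsym m n)) (csym m n)).
Proof.
split; first by move=> m n f _; apply: is_corel_ancestry.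
split; first by move=> m n f g _ _; apply: ancestry_giso.
split; first by move=> m; apply: ancestry_gfun.
split; first by move=> m n p f g _ _; apply: ancestry_gcomp.
split; first by move=> m n m' n' f g _ _; apply: ancestry_gtens.
by move=> m n; apply: ancestry_gfun.
Qed.
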